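(* Let $\lambda\in\mathbb{R}$ and define, for $x>0$, $$f_\lambda(x)=[\psi'(x)]^2+\psi''(x)-\frac{x^2+\lambda x+12}{12x^4(x+1)^2}.$$ Then $f_\lambda$ is completely monotonic on $(0,\infty)$ if and only if $\lambda\le 0$.
   Context: $\Gamma$ is Euler's gamma function, $\psi=\Gamma'/\Gamma$ is the digamma function, and $\psi',\psi''$ are its first and second derivatives (tri- and tetragamma functions). A function $f$ is completely monotonic on an interval $I$ if $f$ has derivatives of all orders on $I$ and $0\le(-1)^n f^{(n)}(x)<\infty$ for all $x\in I$ and all integers $n\ge0$. *)

From Stdlib Require Import Arith Factorial Reals Lra.
Open Scope R_scope.

Fixpoint poch (x : R) (n : nat) : R :=
  match n with
  | O => x
  | S m => poch x m * (x + INR (S m))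
  end.

(* Gauss/Euler product approximants: Gamma(x) = lim n! n^x / (x (x+1) ... (x+n)) *)
Definition Gamma_seq (x : R) (n : nat) : R :=
  INR (fact n) * Rpower (INR n) x / poch x n.

Definition is_Gamma_on_pos (g : R -> R) : Prop :=
  forall x, 0 < x -> Un_cv (Gamma_seq x) (g x).

(* f is completely monotonic on (0,oo): there is a sequence D of successive
   derivatives of f on (0,oo) with 0 <= (-1)^n D n x for all x > 0.
   (Finiteness is automatic for real-valued functions.) *)
Definition completely_monotonic_pos (f : R -> R) : Prop :=
  exists D : nat -> R -> R,
    (forall x, 0 < x -> D O x = f x) /\
    (forall n x, 0 < x -> derivable_pt_lim (D n) x (D (S n) x)) /\
    (forall n x, 0 < x -> 0 <= (-1) ^ n * D n x).

From Stdlib Require Import Reals Ranalysis5 Factorial Lra Lia Psatz ClassicalEpsilon FunctionalExtensionality List.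
From Coquelicot Require Import Coquelicot.
Open Scope R_scope.

(** Write [f_lam = f0 - (lam/12) x^-3 (x+1)^-2] with [f0 = (psi')^2 + psi'' - r],
   [r x = (x^2 + 12) / (12 x^4 (x+1)^2)].

   Sufficiency ([lam <= 0]).  The recurrences [psi'(x) = x^-2 + psi'(x+1)] and
   [psi''(x) = -2 x^-3 + psi''(x+1)] give [f0 x - f0 (x+1) = 2 x^-2 (psi' x - q x)]
   for an explicit rational function [q].  In turn [psi' - q = sum_j kappa (x+j)]
   where [kappa x = x^-2 - q x + q (x+1)] is a finite sum of terms
   [c k! / (x+b)^(k+1)], i.e. the Laplace transform of [exp(-3t) phi(t)] for an
   exponential polynomial [phi >= 0]; so [kappa], then [psi' - q], then
   [f0 = sum_k 2 (x+k)^-2 (psi' - q)(x+k)] (as [f0] vanishes at infinity) are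
   completely monotonic (CM), and so is [f_lam].
   Necessity ([lam > 0]).  Elementary bounds on [psi'(x+1)], [psi''(x+1)] show
   [f_lam x < 0] for small [x > 0]. *)

(** ** Limits of real sequences *)

Definition seq_lim (u : nat -> R) : R := epsilon (inhabits 0) (fun l => Un_cv u l).

Lemma seq_lim_spec u l : Un_cv u l -> seq_lim u = l.
Proof.
  intro H. unfold seq_lim.
  assert (Hs : Un_cv u (epsilon (inhabits 0) (fun l => Un_cv u l))).
  { apply epsilon_spec. exists l; exact H. }
  exact (UL_sequence _ _ _ Hs H).
Qed.

Lemma cv_const c : Un_cv (fun _ => c) c.
Proof. intros eps he. exists O. intros. unfold Rdist. rewrite Rminus_diag, Rabs_R0. exact he. Qed.

Lemma cv_shift u l : Un_cv u l -> Un_cv (fun n => u (S n)) l.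
Proof. intros H eps he. destruct (H eps he) as [N HN]. exists N. intros n hn. apply HN. lia. Qed.

Lemma cv_unshift u l : Un_cv (fun n => u (S n)) l -> Un_cv u l.
Proof.
  intros H eps he. destruct (H eps he) as [N HN]. exists (S N). intros n hn.
  destruct n as [|n]; [lia|]. apply HN. lia.
Qed.

Lemma cv_c_over_n C : Un_cv (fun n => C / INR (S n)) 0.
Proof.
  intros eps he. destruct (INR_unbounded (Rabs C / eps)) as [N HN].
  exists N. intros n hn. unfold Rdist. rewrite Rminus_0_r.
  assert (hN : INR N <= INR n) by (apply le_INR; lia).
  assert (h0 : 0 < INR (S n)) by (apply lt_0_INR; lia).
  rewrite S_INR in *.
  unfold Rdiv. rewrite Rabs_mult, Rabs_inv, (Rabs_pos_eq (INR n + 1)) by lra.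
  assert (Rabs C / eps < INR n + 1) by lra.
  assert (hC : 0 <= Rabs C) by apply Rabs_pos.
  apply (Rmult_lt_reg_r (INR n + 1)); [lra|].
  rewrite Rmult_assoc, Rinv_l by lra.
  apply (Rmult_lt_reg_r (/ eps)); [apply Rinv_0_lt_compat; lra|].
  replace (eps * (INR n + 1) * / eps) with (INR n + 1) by (field; lra).
  unfold Rdiv in H. lra.
Qed.

Lemma cv_squeeze_0 (u : nat -> R) C : (forall N, Rabs (u N) <= C / INR (S N)) -> Un_cv u 0.
Proof.
  intros H eps he. destruct (cv_c_over_n C eps he) as [N HN]. exists N. intros n hn.
  specialize (HN n hn). specialize (H n). unfold Rdist in *. rewrite Rminus_0_r in *.
  eapply Rle_lt_trans; [exact H|]. eapply Rle_lt_trans; [apply Rle_abs|exact HN].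
Qed.

Lemma cv_nonneg (u : nat -> R) l c : Un_cv u l -> (forall N, 0 <= c * u N) -> 0 <= c * l.
Proof.
  intros H h.
  apply (@Rle_cv_lim (fun _ => 0) (fun N => c * u N)); auto.
  - apply cv_const.
  - apply (CV_mult (fun _ => c) u); [apply cv_const|exact H].
Qed.

Lemma uniform_cauchy_limit (u : nat -> R -> R) (P : R -> Prop) (e : nat -> R) :
  Un_cv e 0 ->
  (forall n m y, P y -> (n <= m)%nat -> Rabs (u m y - u n y) <= e n) ->
  forall y, P y ->
    Un_cv (fun n => u n y) (seq_lim (fun n => u n y)) /\
    forall n, Rabs (seq_lim (fun n => u n y) - u n y) <= e n.
Proof.
  intros He Hb y Py.
  assert (Hc : Cauchy_crit (fun n => u n y)).
  { intros eps Heps.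
    destruct (He (eps/2)) as [N HN]; [lra|].
    exists N. intros n m Hn Hm. unfold Rdist.
    assert (h1 := Hb N n y Py Hn). assert (h2 := Hb N m y Py Hm).
    assert (h3 := HN N (le_n N)). unfold Rdist in h3. rewrite Rminus_0_r in h3.
    apply Rabs_def2 in h3.
    assert (Rabs (u n y - u m y) <= Rabs (u n y - u N y) + Rabs (u m y - u N y)).
    { replace (u n y - u m y) with ((u n y - u N y) + - (u m y - u N y)) by ring.
      eapply Rle_trans; [apply Rabs_triang|]. rewrite Rabs_Ropp. lra. }
    lra. }
  destruct (Rcomplete.R_complete _ Hc) as [l Hl].
  rewrite (seq_lim_spec _ _ Hl). split; [exact Hl|].
  intro n. destruct (Rle_dec (Rabs (l - u n y)) (e n)) as [h|h]; [exact h|].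
  exfalso. apply Rnot_le_lt in h.
  destruct (Hl (Rabs (l - u n y) - e n)) as [M HM]; [lra|].
  assert (h1 := HM (max M n) (Nat.le_max_l M n)). unfold Rdist in h1.
  assert (h2 := Hb n (max M n) y Py (Nat.le_max_r M n)).
  assert (Rabs (l - u n y) <= Rabs (u (max M n) y - l) + Rabs (u (max M n) y - u n y)).
  { replace (l - u n y) with (- (u (max M n) y - l) + (u (max M n) y - u n y)) by ring.
    eapply Rle_trans; [apply Rabs_triang|]. rewrite Rabs_Ropp. lra. }
  lra.
Qed.

Lemma derivative_of_limit (u u' : nat -> R -> R) (f : R -> R) (x r : R) (e : nat -> R) :
  0 < r ->
  (forall n y, Rabs (y - x) < r -> derivable_pt_lim (u n) y (u' n y)) ->
  (forall n y, Rabs (y - x) < r -> continuity_pt (u' n) y) ->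
  (forall y, Rabs (y - x) < r -> Un_cv (fun n => u n y) (f y)) ->
  Un_cv e 0 ->
  (forall n m y, Rabs (y - x) < r -> (n <= m)%nat -> Rabs (u' m y - u' n y) <= e n) ->
  derivable_pt_lim f x (seq_lim (fun n => u' n x)).
Proof.
  intros hr hd hc hf he hb.
  set (rr := mkposreal r hr).
  set (g := fun y => seq_lim (fun n => u' n y)).
  assert (HU := uniform_cauchy_limit u' (fun y => Rabs (y - x) < r) e he hb).
  assert (Hcvu : CVU u' g x rr).
  { intros eps Heps. destruct (he eps Heps) as [N HN]. exists N.
    intros n y Hn Hy. unfold Boule in Hy. simpl in Hy.
    destruct (HU y Hy) as [_ H2]. specialize (H2 n).
    specialize (HN n Hn). unfold Rdist in HN. rewrite Rminus_0_r in HN.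
    unfold g. apply Rabs_def2 in HN. lra. }
  assert (Hcont : forall y, Boule x rr y -> continuity_pt g y).
  { apply (CVU_continuity u' g x rr Hcvu). intros n y Hy. apply hc. exact Hy. }
  change (derivable_pt_lim f x (g x)).
  apply (derivable_pt_lim_CVU u u' f g x x rr); auto.
  unfold Boule. simpl. rewrite Rminus_diag, Rabs_R0. exact hr.
Qed.

Lemma telescoping_bound (a : nat -> R) C : 0 <= C ->
  (forall j, (1 <= j)%nat -> Rabs (a (S j) - a j) <= C * (/ INR j - / INR (S j))) ->
  forall n m, (1 <= n)%nat -> (n <= m)%nat -> Rabs (a m - a n) <= C / INR n.
Proof.
  intros hC H n m hn hnm.
  assert (Hd : forall d, Rabs (a (n + d)%nat - a n) <= C * (/ INR n - / INR (n + d))).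
  { induction d as [|d IH].
    - rewrite Nat.add_0_r, Rminus_diag, Rabs_R0. lra.
    - rewrite Nat.add_succ_r.
      replace (a (S (n + d)) - a n) with ((a (S (n + d)) - a (n + d)%nat) + (a (n + d)%nat - a n)) by ring.
      eapply Rle_trans; [apply Rabs_triang|].
      specialize (H (n + d)%nat ltac:(lia)). lra. }
  replace m with (n + (m - n))%nat by lia.
  eapply Rle_trans; [apply Hd|].
  assert (0 < / INR (n + (m - n))) by (apply Rinv_0_lt_compat, lt_0_INR; lia).
  unfold Rdiv. nra.
Qed.

Lemma sum_increment_bound (f g : nat -> R) N M : (N <= M)%nat ->
  (forall k, Rabs (f k) <= g k) ->
  Rabs (sum_f_R0 f M - sum_f_R0 f N) <= sum_f_R0 g M - sum_f_R0 g N.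
Proof.
  intros hNM H. replace M with (N + (M - N))%nat by lia.
  induction (M - N)%nat as [|d IH].
  - rewrite Nat.add_0_r, Rminus_diag, Rabs_R0. lra.
  - rewrite Nat.add_succ_r. simpl.
    replace (sum_f_R0 f (N + d) + f (S (N + d)) - sum_f_R0 f N) with
      ((sum_f_R0 f (N + d) - sum_f_R0 f N) + f (S (N + d))) by ring.
    eapply Rle_trans; [apply Rabs_triang|]. specialize (H (S (N + d))). lra.
Qed.

Lemma sum_derivable (F F' : nat -> R -> R) y N :
  (forall k, derivable_pt_lim (F k) y (F' k y)) ->
  derivable_pt_lim (fun z => sum_f_R0 (fun k => F k z) N) y (sum_f_R0 (fun k => F' k y) N).
Proof.
  intro H. induction N as [|N IH]; simpl; [apply H|].
  apply (derivable_pt_lim_plus (fun z => sum_f_R0 (fun k => F k z) N) (F (S N))); auto.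
Qed.

Lemma sum_scal_l (f : nat -> R) c N : sum_f_R0 (fun k => c * f k) N = c * sum_f_R0 f N.
Proof. rewrite scal_sum. apply sum_eq. intros. ring. Qed.

Lemma sum_split_first (f : nat -> R) N : sum_f_R0 f (S N) = f O + sum_f_R0 (fun k => f (S k)) N.
Proof.
  induction N as [|N IH]; [simpl; ring|].
  rewrite tech5, IH, tech5. ring.
Qed.

(** ** Completely monotonic functions and their closure properties *)

Definition cm_tower (D : nat -> R -> R) : Prop :=
  (forall n x, 0 < x -> derivable_pt_lim (D n) x (D (S n) x)) /\
  (forall n x, 0 < x -> 0 <= (-1) ^ n * D n x).

Lemma cm_ext f g : completely_monotonic_pos f -> (forall x, 0 < x -> f x = g x) ->
  completely_monotonic_pos g.
Proof.
  intros [D [H0 HD]] H. exists D. split; [|exact HD].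
  intros x hx. rewrite H0 by exact hx. apply H; exact hx.
Qed.

Lemma cm_plus f g : completely_monotonic_pos f -> completely_monotonic_pos g ->
  completely_monotonic_pos (fun x => f x + g x).
Proof.
  intros [D [H0 [HD1 HD2]]] [E [H1 [HE1 HE2]]].
  exists (fun n x => D n x + E n x). split; [|split].
  - intros x hx. rewrite H0, H1 by exact hx. reflexivity.
  - intros n x hx. apply (derivable_pt_lim_plus (D n) (E n)); auto.
  - intros n x hx. specialize (HD2 n x hx). specialize (HE2 n x hx). nra.
Qed.

Lemma cm_scal c f : 0 <= c -> completely_monotonic_pos f ->
  completely_monotonic_pos (fun x => c * f x).
Proof.
  intros hc [D [H0 [HD1 HD2]]].
  exists (fun n x => c * D n x). split; [|split].
  - intros x hx. rewrite H0 by exact hx. reflexivity.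
  - intros n x hx. apply derivable_pt_lim_scal. auto.
  - intros n x hx. specialize (HD2 n x hx).
    replace ((-1) ^ n * (c * D n x)) with (c * ((-1) ^ n * D n x)) by ring.
    apply Rmult_le_pos; auto.
Qed.

Lemma cm_shift f a : 0 <= a -> completely_monotonic_pos f ->
  completely_monotonic_pos (fun x => f (x + a)).
Proof.
  intros ha [D [H0 [HD1 HD2]]].
  exists (fun n x => D n (x + a)). split; [|split].
  - intros x hx. apply H0. lra.
  - intros n x hx.
    assert (H := derivable_pt_lim_comp (fun x => x + a) (D n) x 1 (D (S n) (x + a))).
    rewrite Rmult_1_r in H. apply H.
    + replace 1 with (1 + 0) by ring. apply derivable_pt_lim_plus.
      * apply derivable_pt_lim_id.
      * apply derivable_pt_lim_const.
    + apply HD1. lra.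
  - intros n x hx. apply HD2. lra.
Qed.

(** [leibniz n F G] is the [n]-th derivative of [F 0 * G 0] when [F], [G] are
    towers of successive derivatives, expanded by the Leibniz rule. *)
Fixpoint leibniz (n : nat) (F G : nat -> R -> R) (x : R) : R :=
  match n with
  | O => F O x * G O x
  | S m => leibniz m (fun k => F (S k)) G x + leibniz m F (fun k => G (S k)) x
  end.

Lemma leibniz_derivable n : forall F G x,
  (forall k y, 0 < y -> derivable_pt_lim (F k) y (F (S k) y)) ->
  (forall k y, 0 < y -> derivable_pt_lim (G k) y (G (S k) y)) ->
  0 < x -> derivable_pt_lim (leibniz n F G) x (leibniz (S n) F G x).
Proof.
  induction n as [|n IH]; intros F G x hF hG hx.
  - exact (derivable_pt_lim_mult (F O) (G O) x _ _ (hF O x hx) (hG O x hx)).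
  - apply (derivable_pt_lim_plus (leibniz n (fun k => F (S k)) G)
                                 (leibniz n F (fun k => G (S k)))); apply IH; auto.
Qed.

Lemma leibniz_opp_l n : forall F G x,
  leibniz n (fun k y => - F k y) G x = - leibniz n F G x.
Proof.
  induction n as [|n IH]; intros F G x; simpl; [ring|].
  rewrite (IH (fun k => F (S k))), IH. ring.
Qed.

Lemma leibniz_opp_r n : forall F G x,
  leibniz n F (fun k y => - G k y) x = - leibniz n F G x.
Proof.
  induction n as [|n IH]; intros F G x; simpl; [ring|].
  rewrite IH, (IH F (fun k => G (S k))). ring.
Qed.

(** Each Leibniz term is a product of two factors with the right signs. *)
Lemma leibniz_sign n : forall F G x,
  (forall k, 0 <= (-1) ^ k * F k x) -> (forall k, 0 <= (-1) ^ k * G k x) ->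
  0 <= (-1) ^ n * leibniz n F G x.
Proof.
  induction n as [|n IH]; intros F G x hF hG.
  - simpl. specialize (hF O). specialize (hG O). simpl in *. nra.
  - simpl.
    rewrite <- (Ropp_involutive (leibniz n (fun k => F (S k)) G x)),
            <- (Ropp_involutive (leibniz n F (fun k => G (S k)) x)).
    rewrite <- (leibniz_opp_l n (fun k => F (S k))), <- (leibniz_opp_r n F (fun k => G (S k))).
    assert (A1 : 0 <= (-1) ^ n * leibniz n (fun k y => - F (S k) y) G x).
    { apply IH; auto. intro k. specialize (hF (S k)). simpl in hF. nra. }
    assert (A2 : 0 <= (-1) ^ n * leibniz n F (fun k y => - G (S k) y) x).
    { apply IH; auto. intro k. specialize (hG (S k)). simpl in hG. nra. }
    nra.
Qed.

Lemma cm_mult f g : completely_monotonic_pos f -> completely_monotonic_pos g ->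
  completely_monotonic_pos (fun x => f x * g x).
Proof.
  intros [D [H0 [HD1 HD2]]] [E [H1 [HE1 HE2]]].
  exists (fun n x => leibniz n D E x). split; [|split].
  - intros x hx. simpl. rewrite H0, H1 by exact hx. reflexivity.
  - intros n x hx. apply leibniz_derivable; auto.
  - intros n x hx. apply leibniz_sign; intro k; auto.
Qed.

(** ** Convergent series of completely monotonic functions *)

Lemma Rabs_alternating n v : 0 <= (-1) ^ n * v -> Rabs v = (-1) ^ n * v.
Proof.
  intro h. rewrite <- (Rabs_pos_eq _ h), Rabs_mult, <- RPow_abs.
  replace (Rabs (-1)) with 1 by (unfold Rabs; destruct Rcase_abs; lra).
  rewrite pow1. ring.
Qed.

Section Tower.
Variable D : nat -> R -> R.
Hypothesis HD : cm_tower D.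

(** [|D n|] is nonincreasing on [(0,oo)], since its derivative [-|D (n+1)|]
    is nonpositive. *)
Lemma cm_tower_antitone n a y : 0 < a -> a <= y -> (-1) ^ n * D n y <= (-1) ^ n * D n a.
Proof.
  destruct HD as [H1 H2]. intros ha hay.
  destruct (Req_dec a y) as [->|hne]; [lra|].
  destruct (MVT_cor2 (fun z => (-1) ^ n * D n z) (fun z => (-1) ^ n * D (S n) z) a y ltac:(lra))
    as [c [Hc1 Hc2]].
  { intros c hc. apply derivable_pt_lim_scal. apply H1. lra. }
  assert (hs := H2 (S n) c ltac:(lra)). simpl in hs. nra.
Qed.

(** By the mean value theorem on [[y/2, y]] and monotonicity of [|D (n+1)|]:
    [|D (n+1) y| <= (2/y) |D n (y/2)|]. *)
Lemma cm_tower_step n y : 0 < y ->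
  (-1) ^ (S n) * D (S n) y <= 2 / y * ((-1) ^ n * D n (y / 2)).
Proof.
  intros hy. pose proof HD as [H1 H2].
  destruct (MVT_cor2 (fun z => (-1) ^ n * D n z) (fun z => (-1) ^ n * D (S n) z) (y/2) y ltac:(lra))
    as [c [Hc1 Hc2]].
  { intros c hc. apply derivable_pt_lim_scal. apply H1. lra. }
  assert (hm := cm_tower_antitone (S n) c y ltac:(lra) ltac:(lra)).
  assert (h0 := H2 n y hy).
  simpl in hm, Hc1 |- *.
  assert (e : 2 / y * ((-1) ^ n * D n (y / 2))
     = 2 / y * ((-1) ^ n * D n y) + 2 / y * (- ((-1) ^ n * D (S n) c * (y - y/2)))).
  { rewrite <- Hc1. field. lra. }
  rewrite e.
  assert (0 <= 2 / y * ((-1) ^ n * D n y)).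
  { apply Rmult_le_pos; [|exact h0]. unfold Rdiv. apply Rmult_le_pos; [lra|].
    left. apply Rinv_0_lt_compat. lra. }
  assert (2 / y * (- ((-1) ^ n * D (S n) c * (y - y / 2))) = -1 * (-1) ^ n * D (S n) c).
  { field. lra. }
  lra.
Qed.

End Tower.

(** The constant in the derivative estimate [|D n y| <= C_n(y) D 0 (y / 2^n)]. *)
Fixpoint cm_deriv_const (n : nat) (y : R) : R :=
  match n with O => 1 | S m => 2 / y * cm_deriv_const m (y / 2) end.

Lemma cm_deriv_const_pos n : forall y, 0 < y -> 0 < cm_deriv_const n y.
Proof.
  induction n as [|n IH]; intros y hy; simpl; [lra|].
  apply Rmult_lt_0_compat; [|apply IH; lra].
  unfold Rdiv. apply Rmult_lt_0_compat; [lra|]. apply Rinv_0_lt_compat; lra.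
Qed.

Lemma cm_tower_bound D n : cm_tower D ->
  forall y, 0 < y -> (-1) ^ n * D n y <= cm_deriv_const n y * D O (y / 2 ^ n).
Proof.
  intro HD. induction n as [|n IH]; intros y hy.
  - simpl. replace (y / 1) with y by field. lra.
  - eapply Rle_trans; [apply cm_tower_step; auto|].
    simpl cm_deriv_const. specialize (IH (y/2) ltac:(lra)).
    assert (h2n : 2 ^ n > 0) by (apply pow_lt; lra).
    replace (y / 2 / 2 ^ n) with (y / 2 ^ S n) in IH by (simpl; field; repeat split; lra).
    assert (0 <= 2 / y).
    { unfold Rdiv. apply Rmult_le_pos; [lra|]. left. apply Rinv_0_lt_compat; lra. }
    rewrite Rmult_assoc. apply Rmult_le_compat_l; auto.
Qed.

Section Series.
Variable Dk : nat -> nat -> R -> R.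
Hypothesis HDk : forall k, cm_tower (Dk k).
Hypothesis Hsum : forall y, 0 < y -> exists l, Un_cv (fun N => sum_f_R0 (fun k => Dk k O y) N) l.

Let psum n y N := sum_f_R0 (fun k => Dk k n y) N.

(** Near any [x > 0], the differentiated series [sum_k Dk k n] is uniformly
    Cauchy: its tails are dominated by tails of [sum_k Dk k 0] at [x / 2^(n+1)]. *)
Lemma series_uniform_cauchy n x : 0 < x -> exists e : nat -> R, Un_cv e 0 /\
  forall N M y, Rabs (y - x) < x / 2 -> (N <= M)%nat -> Rabs (psum n y M - psum n y N) <= e N.
Proof.
  intro hx. set (a := x / 2). set (z := a / 2 ^ n).
  assert (ha : 0 < a) by (unfold a; lra).
  assert (hz : 0 < z).
  { unfold z, Rdiv. apply Rmult_lt_0_compat; auto. apply Rinv_0_lt_compat, pow_lt; lra. }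
  destruct (Hsum z hz) as [Sl HS].
  exists (fun N => cm_deriv_const n a * (Sl - psum O z N)). split.
  - replace 0 with (cm_deriv_const n a * 0) by ring.
    apply (CV_mult (fun _ => cm_deriv_const n a) (fun N => Sl - psum O z N)); [apply cv_const|].
    intros eps heps. destruct (HS eps heps) as [N HN]. exists N. intros m hm.
    specialize (HN m hm). unfold Rdist in *. unfold psum.
    rewrite <- Rabs_Ropp. replace (- (Sl - sum_f_R0 (fun k => Dk k O z) m - 0))
      with (sum_f_R0 (fun k => Dk k O z) m - Sl) by ring. exact HN.
  - intros N M y hy hNM.
    assert (hay : a <= y) by (apply Rabs_def2 in hy; unfold a in *; lra).
    eapply Rle_trans.
    { apply (sum_increment_bound (fun k => Dk k n y) (fun k => cm_deriv_const n a * Dk k O z) N M hNM).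
      intro k. destruct (HDk k) as [H1 H2].
      rewrite (Rabs_alternating n); [|apply H2; lra].
      eapply Rle_trans; [apply (cm_tower_antitone (Dk k) (HDk k) n a y ha hay)|].
      apply cm_tower_bound; auto. }
    assert (Hg : Un_growing (psum O z)).
    { intro m. unfold psum. simpl. destruct (HDk (S m)) as [_ H2].
      specialize (H2 O z hz). simpl in H2. lra. }
    assert (hM := growing_ineq _ _ Hg HS M).
    assert (hb := cm_deriv_const_pos n a ha).
    rewrite !sum_scal_l. unfold psum in *. nra.
Qed.

Lemma series_cv n y : 0 < y -> Un_cv (fun N => psum n y N) (seq_lim (fun N => psum n y N)).
Proof.
  intro hy. destruct (series_uniform_cauchy n y hy) as [e [He Hb]].
  apply (uniform_cauchy_limit (fun N y => psum n y N) (fun y' => Rabs (y' - y) < y / 2) e He).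
  - intros. apply Hb; auto.
  - rewrite Rminus_diag, Rabs_R0. lra.
Qed.

Lemma cm_tower_series : cm_tower (fun n y => seq_lim (fun N => psum n y N)).
Proof.
  split.
  - intros n x hx. destruct (series_uniform_cauchy (S n) x hx) as [e [He Hb]].
    apply (derivative_of_limit (fun N y => psum n y N) (fun N y => psum (S n) y N) _ x (x/2) e);
      auto; [lra| | |].
    + intros N y hy. apply (sum_derivable (fun k => Dk k n) (fun k => Dk k (S n))).
      intro k. apply (HDk k). apply Rabs_def2 in hy. lra.
    + intros N y hy. apply derivable_continuous_pt.
      exists (psum (S (S n)) y N).
      apply (sum_derivable (fun k => Dk k (S n)) (fun k => Dk k (S (S n)))).
      intro k. apply (HDk k). apply Rabs_def2 in hy. lra.
    + intros y hy. apply series_cv. apply Rabs_def2 in hy. lra.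
  - intros n x hx. apply (cv_nonneg (fun N => psum n x N)); [apply series_cv; auto|].
    intro N. unfold psum. rewrite scal_sum.
    apply cond_pos_sum. intro k. rewrite Rmult_comm. apply (HDk k). exact hx.
Qed.
End Series.

Lemma cm_series (F : nat -> R -> R) :
  (forall k, completely_monotonic_pos (F k)) ->
  (forall y, 0 < y -> exists l, Un_cv (fun N => sum_f_R0 (fun k => F k y) N) l) ->
  completely_monotonic_pos (fun y => seq_lim (fun N => sum_f_R0 (fun k => F k y) N)).
Proof.
  intros HF Hs.
  set (Dk := fun k => epsilon (inhabits (fun (_ : nat) (_ : R) => 0))
                        (fun D => (forall x, 0 < x -> D O x = F k x) /\ cm_tower D)).
  assert (HDk : forall k, (forall x, 0 < x -> Dk k O x = F k x) /\ cm_tower (Dk k)).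
  { intro k. unfold Dk. apply epsilon_spec. apply HF. }
  assert (Heq : forall y, 0 < y -> forall N,
     sum_f_R0 (fun k => Dk k O y) N = sum_f_R0 (fun k => F k y) N).
  { intros y hy N. apply sum_eq. intros. apply HDk. exact hy. }
  exists (fun n y => seq_lim (fun N => sum_f_R0 (fun k => Dk k n y) N)). split.
  - intros x hx. f_equal. apply functional_extensionality. intro N. apply Heq. exact hx.
  - apply cm_tower_series; [intro k; apply HDk|].
    intros y hy. destruct (Hs y hy) as [l Hl]. exists l.
    intros eps he. destruct (Hl eps he) as [N HN]. exists N. intros. rewrite Heq; auto.
Qed.

(** ** Finite Laplace sums with nonnegative kernels are completely monotonic

    A term [(c, k, b)] stands for [c k! / (x+b)^(k+1)], the Laplace transform
    of [c t^k exp(-b t)].  Instead of integrating, we use the explicit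
    antiderivative [gamma_tail k b T] of [-t^k exp(-b t)] ("[int_T^oo]"). *)

Ltac field_nz := field; repeat split; try lra; try (apply pow_nonzero; lra).

Lemma pow_le_exp m u : 0 <= u -> u ^ m <= exp (INR m * u).
Proof.
  intro hu. induction m as [|m IH].
  - simpl. rewrite Rmult_0_l, exp_0. lra.
  - rewrite S_INR. replace ((INR m + 1) * u) with (INR m * u + u) by ring.
    rewrite exp_plus. simpl.
    assert (h1 := exp_ineq1_le u). assert (0 <= u ^ m) by (apply pow_le; lra).
    rewrite Rmult_comm. apply Rmult_le_compat; lra.
Qed.

Lemma pow_exp_decay j b T : 0 < b -> 0 < T ->
  T ^ j * exp (- (b * T)) <= (INR (S j)) ^ (S j) / (b ^ (S j)) / T.
Proof.
  intros hb hT.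
  set (m := INR (S j)).
  assert (hm : 0 < m) by (unfold m; apply lt_0_INR; lia).
  assert (hbT : 0 < b * T / m).
  { unfold Rdiv. apply Rmult_lt_0_compat; [nra|apply Rinv_0_lt_compat; lra]. }
  assert (H := pow_le_exp (S j) (b * T / m) ltac:(lra)).
  fold m in H. replace (m * (b * T / m)) with (b * T) in H by (field; lra).
  rewrite exp_Ropp.
  assert (he : 0 < exp (b * T)) by apply exp_pos.
  assert (hp : 0 < (b * T / m) ^ S j) by (apply pow_lt; lra).
  replace (m ^ S j / b ^ S j / T) with (T ^ j * / ((b * T / m) ^ S j)).
  2:{ unfold Rdiv. rewrite !Rpow_mult_distr, !pow_inv. simpl. field_nz. }
  apply Rmult_le_compat_l; [apply pow_le; lra|].
  apply Rinv_le_contravar; lra.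
Qed.

(** [gamma_tail k b T = int_T^oo t^k exp(-bt) dt], by integration by parts. *)
Fixpoint gamma_tail (k : nat) (b T : R) : R :=
  match k with
  | O => exp (- (b * T)) / b
  | S j => (INR (S j) * gamma_tail j b T + T ^ (S j) * exp (- (b * T))) / b
  end.

Lemma gamma_tail_0 k b : 0 < b -> gamma_tail k b 0 = INR (fact k) / b ^ (S k).
Proof.
  intro hb. induction k as [|k IH]; simpl gamma_tail;
    rewrite Rmult_0_r, Ropp_0, exp_0; [simpl; field_nz|].
  rewrite IH, fact_simpl, mult_INR. simpl. field_nz.
Qed.

Lemma gamma_tail_derive k b T : 0 < b ->
  is_derive (gamma_tail k b) T (- (T ^ k * exp (- (b * T)))).
Proof.
  intro hb. induction k as [|k IH].
  - simpl gamma_tail. auto_derive; [exact I|]. simpl. field. lra.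
  - change (gamma_tail (S k) b) with
      (fun T => (INR (S k) * gamma_tail k b T + T ^ (S k) * exp (- (b * T))) / b).
    auto_derive; [exists (- (T ^ k * exp (- (b * T)))); exact IH|].
    replace (Derive (fun x => gamma_tail k b x) T) with (- (T ^ k * exp (- (b * T))))
      by (symmetry; apply is_derive_unique; exact IH).
    destruct k; simpl; try rewrite S_INR; field_nz.
Qed.

Lemma gamma_tail_nonneg k b T : 0 < b -> 0 <= T -> 0 <= gamma_tail k b T.
Proof.
  intros hb hT. assert (0 < / b) by (apply Rinv_0_lt_compat; lra).
  assert (0 < exp (- (b * T))) by apply exp_pos.
  induction k as [|k IH]; [simpl gamma_tail; unfold Rdiv; apply Rmult_le_pos; lra|].
  change (gamma_tail (S k) b T) with
    ((INR (S k) * gamma_tail k b T + T ^ (S k) * exp (- (b * T))) / b).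
  unfold Rdiv. apply Rmult_le_pos; [|lra]. apply Rplus_le_le_0_compat.
  - apply Rmult_le_pos; [apply pos_INR|exact IH].
  - apply Rmult_le_pos; [apply pow_le|]; lra.
Qed.

Lemma gamma_tail_decay k b : 0 < b -> exists M, forall T, 0 < T -> gamma_tail k b T <= M / T.
Proof.
  intro hb. assert (hb' : 0 < / b) by (apply Rinv_0_lt_compat; lra).
  induction k as [|k [M IH]].
  - exists (INR 1 ^ 1 / b ^ 1 / b). intros T hT. simpl gamma_tail.
    assert (H := pow_exp_decay 0 b T hb hT). simpl in H |- *.
    replace (1 * 1 / (b * 1) / b / T) with (1 * 1 / (b * 1) / T / b) by field_nz.
    unfold Rdiv in *. apply Rmult_le_compat_r; lra.
  - exists ((INR (S k) * M + INR (S (S k)) ^ (S (S k)) / b ^ (S (S k))) / b).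
    intros T hT.
    change (gamma_tail (S k) b T) with
      ((INR (S k) * gamma_tail k b T + T ^ (S k) * exp (- (b * T))) / b).
    assert (H := pow_exp_decay (S k) b T hb hT). specialize (IH T hT).
    assert (hk : 0 <= INR (S k)) by apply pos_INR.
    replace ((INR (S k) * M + INR (S (S k)) ^ S (S k) / b ^ S (S k)) / b / T) with
      ((INR (S k) * (M / T) + INR (S (S k)) ^ S (S k) / b ^ S (S k) / T) / b) by field_nz.
    unfold Rdiv at 1 3. apply Rmult_le_compat_r; [lra|].
    apply Rplus_le_compat; [apply Rmult_le_compat_l; auto|exact H].
Qed.

Definition term := (R * nat * R)%type.

Fixpoint laplace_sum (L : list term) (x : R) : R :=
  match L with
  | nil => 0
  | (c, k, b) :: L' => c * INR (fact k) / (x + b) ^ (S k) + laplace_sum L' x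
  end.

(** [kernel L t = sum c t^k exp(-bt)], whose Laplace transform is [laplace_sum L]. *)
Fixpoint kernel (L : list term) (t : R) : R :=
  match L with
  | nil => 0
  | (c, k, b) :: L' => c * t ^ k * exp (- (b * t)) + kernel L' t
  end.

(** [kernel_tail L T = int_T^oo kernel L t dt]. *)
Fixpoint kernel_tail (L : list term) (T : R) : R :=
  match L with
  | nil => 0
  | (c, k, b) :: L' => c * gamma_tail k b T + kernel_tail L' T
  end.

Definition bases_pos (L : list term) := forall c k b, In (c, k, b) L -> 0 < b.
Definition bases_nonneg (L : list term) := forall c k b, In (c, k, b) L -> 0 <= b.

Lemma bases_pos_cons c k b L : bases_pos ((c, k, b) :: L) -> 0 < b /\ bases_pos L.
Proof. intro H. split; [apply (H c k b); now left|intros ? ? ? h; eapply H; right; exact h]. Qed.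

Lemma bases_nonneg_cons c k b L : bases_nonneg ((c, k, b) :: L) -> 0 <= b /\ bases_nonneg L.
Proof. intro H. split; [apply (H c k b); now left|intros ? ? ? h; eapply H; right; exact h]. Qed.

Lemma kernel_tail_0 L : bases_pos L -> kernel_tail L 0 = laplace_sum L 0.
Proof.
  induction L as [|[[c k] b] L IH]; intro hL; simpl; [reflexivity|].
  apply bases_pos_cons in hL. destruct hL as [hb hL].
  rewrite (IH hL), (gamma_tail_0 k b hb), Rplus_0_l. f_equal. simpl. field_nz.
Qed.

Lemma kernel_tail_derive L T : bases_pos L -> is_derive (kernel_tail L) T (- kernel L T).
Proof.
  induction L as [|[[c k] b] L IH]; intro hL; simpl; [auto_derive; [exact I|ring]|].
  apply bases_pos_cons in hL. destruct hL as [hb hL].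
  change (kernel_tail ((c, k, b) :: L)) with (fun T => c * gamma_tail k b T + kernel_tail L T).
  assert (H1 := gamma_tail_derive k b T hb). assert (H2 := IH hL).
  auto_derive.
  - split; [exists (- (T ^ k * exp (- (b * T)))); exact H1|].
    split; [exists (- kernel L T); exact H2|exact I].
  - replace (Derive (fun x => gamma_tail k b x) T) with (- (T ^ k * exp (- (b * T))))
      by (symmetry; apply is_derive_unique; exact H1).
    replace (Derive (fun x => kernel_tail L x) T) with (- kernel L T)
      by (symmetry; apply is_derive_unique; exact H2).
    ring.
Qed.

Lemma kernel_tail_decay L : bases_pos L -> exists M, forall T, 0 < T -> - (M / T) <= kernel_tail L T.
Proof.
  induction L as [|[[c k] b] L IH]; intro hL; simpl.
  - exists 0. intros. unfold Rdiv. lra.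
  - apply bases_pos_cons in hL. destruct hL as [hb hL].
    destruct (IH hL) as [M1 H1]. destruct (gamma_tail_decay k b hb) as [M2 H2].
    exists (Rabs c * M2 + M1). intros T hT.
    specialize (H1 T hT). specialize (H2 T hT).
    assert (h0 := gamma_tail_nonneg k b T hb ltac:(lra)).
    assert (c * gamma_tail k b T >= - (Rabs c * (M2 / T))).
    { destruct (Rle_dec 0 c).
      - rewrite Rabs_pos_eq by lra. assert (0 <= c * gamma_tail k b T) by nra.
        assert (0 <= M2 / T) by lra. nra.
      - rewrite Rabs_left by lra. nra. }
    replace ((Rabs c * M2 + M1) / T) with (Rabs c * (M2 / T) + M1 / T) by (field; lra).
    lra.
Qed.

Lemma nonneg_of_inv_lower_bound a M : (forall T, 0 < T -> - (M / T) <= a) -> 0 <= a.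
Proof.
  intro H. destruct (Rle_dec 0 a) as [h|h]; [exact h|exfalso].
  assert (hM : M <= Rabs M) by apply Rle_abs. assert (0 <= Rabs M) by apply Rabs_pos.
  set (T := (Rabs M + 1) / (- a)).
  assert (hT : 0 < T) by (unfold T, Rdiv; apply Rmult_lt_0_compat; [lra|apply Rinv_0_lt_compat; lra]).
  specialize (H T hT).
  assert (haT : a * T = - (Rabs M + 1)) by (unfold T; field; lra).
  assert (- M <= a * T); [|lra].
  replace (- M) with (- (M / T) * T) by (field; lra).
  apply Rmult_le_compat_r; lra.
Qed.

(** Positivity: [laplace_sum L 0 = int_0^oo kernel L >= 0] when the kernel is
    nonnegative, since [kernel_tail L] decreases from [laplace_sum L 0] and
    tends to [0] at infinity. *)
Lemma laplace_sum_nonneg L : bases_pos L -> (forall t, 0 < t -> 0 <= kernel L t) ->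
  0 <= laplace_sum L 0.
Proof.
  intros hL hk. rewrite <- kernel_tail_0 by exact hL.
  destruct (kernel_tail_decay L hL) as [M HM].
  apply (nonneg_of_inv_lower_bound _ M). intros T hT.
  eapply Rle_trans; [apply (HM T hT)|].
  destruct (MVT_cor2 (kernel_tail L) (fun t => - kernel L t) 0 T hT) as [c [Hc1 Hc2]].
  { intros c hc. apply is_derive_Reals, kernel_tail_derive, hL. }
  specialize (hk c ltac:(lra)). nra.
Qed.

(** [shift_order n L] multiplies each kernel term by [t^n] (up to sign, this
    is the [n]-th derivative); [shift_base x L] moreover multiplies by [exp(-xt)]
    (translation by [x]). *)
Definition shift_order (n : nat) (L : list term) : list term :=
  map (fun p => let '(c, k, b) := p in (c, (k + n)%nat, b)) L.
Definition shift_base (n : nat) (x : R) (L : list term) : list term :=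
  map (fun p => let '(c, k, b) := p in (c, (k + n)%nat, b + x)) L.

Lemma term_derive c k b x : 0 < x + b ->
  is_derive (fun x => c * INR (fact k) / (x + b) ^ (S k)) x
    (- (c * INR (fact (S k)) / (x + b) ^ (S (S k)))).
Proof.
  intro h. assert (hk : 0 < (x + b) ^ k) by (apply pow_lt; lra).
  auto_derive; [nra|].
  change (match k with O => 1 | S _ => INR k + 1 end) with (INR (S k)).
  rewrite fact_simpl, mult_INR, <- !tech_pow_Rmult. field. nra.
Qed.

Lemma laplace_sum_derive L n x : bases_nonneg L -> 0 < x ->
  is_derive (laplace_sum (shift_order n L)) x (- laplace_sum (shift_order (S n) L) x).
Proof.
  induction L as [|[[c k] b] L IH]; intros hL hx; simpl; [auto_derive; [exact I|ring]|].
  apply bases_nonneg_cons in hL. destruct hL as [hb hL].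
  rewrite Nat.add_succ_r, Ropp_plus_distr.
  apply (is_derive_plus (fun x => c * INR (fact (k + n)) / (x + b) ^ (S (k + n)))
                        (laplace_sum (shift_order n L))).
  - apply term_derive. lra.
  - apply IH; auto.
Qed.

Lemma laplace_sum_shift_base L n x :
  laplace_sum (shift_order n L) x = laplace_sum (shift_base n x L) 0.
Proof.
  induction L as [|[[c k] b] L IH]; simpl; [reflexivity|].
  rewrite IH, Rplus_0_l, (Rplus_comm b x). reflexivity.
Qed.

Lemma kernel_shift_base L n x t :
  kernel (shift_base n x L) t = t ^ n * exp (- (x * t)) * kernel L t.
Proof.
  induction L as [|[[c k] b] L IH]; simpl; [ring|].
  rewrite IH, pow_add.
  replace (- ((b + x) * t)) with (- (b * t) + - (x * t)) by ring. rewrite exp_plus. ring.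
Qed.

Lemma bases_pos_shift_base L n x : bases_nonneg L -> 0 < x -> bases_pos (shift_base n x L).
Proof.
  induction L as [|[[c k] b] L IH]; intros hL hx; [intros ? ? ? []|].
  apply bases_nonneg_cons in hL. destruct hL as [hb hL].
  intros c' k' b' [h|h]; [inversion h; lra|exact (IH hL hx c' k' b' h)].
Qed.

Lemma laplace_sum_shift_order_0 L x : laplace_sum (shift_order 0 L) x = laplace_sum L x.
Proof.
  induction L as [|[[c k] b] L IH]; simpl; [reflexivity|]. rewrite IH, Nat.add_0_r. reflexivity.
Qed.

(** Bernstein's easy direction for finite sums: a nonnegative kernel gives a
    CM Laplace transform; the [n]-th derivative is [(-1)^n] times the transform
    of [t^n kernel]. *)
Lemma cm_laplace_sum L : bases_nonneg L -> (forall t, 0 < t -> 0 <= kernel L t) ->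
  completely_monotonic_pos (laplace_sum L).
Proof.
  intros hL hk.
  exists (fun n x => (-1) ^ n * laplace_sum (shift_order n L) x). split; [|split].
  - intros x hx. simpl. rewrite Rmult_1_l. apply laplace_sum_shift_order_0.
  - intros n x hx. apply is_derive_Reals.
    replace ((-1) ^ S n * laplace_sum (shift_order (S n) L) x)
      with ((-1) ^ n * (- laplace_sum (shift_order (S n) L) x)) by (simpl; ring).
    apply (is_derive_scal (laplace_sum (shift_order n L))). apply laplace_sum_derive; auto.
  - intros n x hx.
    replace ((-1) ^ n * ((-1) ^ n * laplace_sum (shift_order n L) x))
      with (((-1) * (-1)) ^ n * laplace_sum (shift_order n L) x)
      by (rewrite Rpow_mult_distr; ring).
    replace ((-1) * (-1)) with 1 by ring. rewrite pow1, Rmult_1_l.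
    rewrite laplace_sum_shift_base. apply laplace_sum_nonneg; [apply bases_pos_shift_base; auto|].
    intros t ht. rewrite kernel_shift_base. apply Rmult_le_pos; [|apply hk; exact ht].
    apply Rmult_le_pos; [apply pow_le; lra|left; apply exp_pos].
Qed.

(** ** The function [kappa] is completely monotonic *)

(** The rational part [r] of [f0], the approximation [q] of [psi'] and the
    defect [kappa x = x^-2 - q x + q (x+1)] (so that [psi' - q = sum_j kappa (x+j)]). *)
Definition rat_r (x : R) : R := (x ^ 2 + 12) / (12 * x ^ 4 * (x + 1) ^ 2).
Definition q_approx (z : R) : R := / (2 * z ^ 2) + / z + z ^ 2 * (rat_r z - rat_r (z + 1)) / 2.
Definition kappa (z : R) : R := / z ^ 2 - q_approx z + q_approx (z + 1).

Lemma nonneg_from_derivative (f f' : R -> R) : 0 <= f 0 ->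
  (forall t, 0 <= t -> is_derive f t (f' t)) -> (forall t, 0 <= t -> 0 <= f' t) ->
  forall t, 0 <= t -> 0 <= f t.
Proof.
  intros h0 hd hp t ht. destruct (Req_dec t 0) as [->|hne]; [exact h0|].
  destruct (MVT_cor2 f f' 0 t ltac:(lra)) as [c [Hc1 Hc2]].
  { intros c hc. apply is_derive_Reals. apply hd. lra. }
  specialize (hp c ltac:(lra)). nra.
Qed.

(** [phi0 t = exp(3t) kernel(t)] for the partial fractions of [kappa] (see
    [kernel_kappa_terms]), and its derivatives [phi1 .. phi4]; [phi4 = exp t * chi0],
    and [chi1 .. chi4] are the derivatives of [chi0].  Each function is [>= 0] at [0], and [chi4] is
    visibly [>= 0]; integrating back up the chain gives [phi0 >= 0]. *)
Definition phi0 (t : R) : R := exp (2*t) * ((-43/6) + (9/2)*t + (-1)*t^2 + (1/12)*t^3) + exp t * ((40/3) + (-4/3)*t + (1)*t^2 + (-1/12)*t^3) + ((-37/6) + (-13/6)*t).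
Definition phi1 (t : R) : R := exp (2*t) * ((-59/6) + (7)*t + (-7/4)*t^2 + (1/6)*t^3) + exp t * ((12) + (2/3)*t + (3/4)*t^2 + (-1/12)*t^3) + ((-13/6)).
Definition phi2 (t : R) : R := exp (2*t) * ((-38/3) + (21/2)*t + (-3)*t^2 + (1/3)*t^3) + exp t * ((38/3) + (13/6)*t + (1/2)*t^2 + (-1/12)*t^3).
Definition phi3 (t : R) : R := exp (2*t) * ((-89/6) + (15)*t + (-5)*t^2 + (2/3)*t^3) + exp t * ((89/6) + (19/6)*t + (1/4)*t^2 + (-1/12)*t^3).
Definition phi4 (t : R) : R := exp (2*t) * ((-44/3) + (20)*t + (-8)*t^2 + (4/3)*t^3) + exp t * ((18) + (11/3)*t + (-1/12)*t^3).
Definition chi0 (t : R) : R := exp t * ((-44/3) + (20)*t + (-8)*t^2 + (4/3)*t^3) + ((18) + (11/3)*t + (-1/12)*t^3).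
Definition chi1 (t : R) : R := exp t * ((16/3) + (4)*t + (-4)*t^2 + (4/3)*t^3) + ((11/3) + (-1/4)*t^2).
Definition chi2 (t : R) : R := exp t * ((28/3) + (-4)*t + (4/3)*t^3) + ((-1/2)*t).
Definition chi3 (t : R) : R := exp t * ((16/3) + (-4)*t + (4)*t^2 + (4/3)*t^3) + ((-1/2)).
Definition chi4 (t : R) : R := exp t * ((4/3) + (4)*t + (8)*t^2 + (4/3)*t^3).

Ltac derive_expoly := intros ? ?; auto_derive; try exact I; try field.

Lemma chi0_nonneg t : 0 <= t -> 0 <= chi0 t.
Proof.
  assert (E := exp_0).
  assert (H4 : forall t, 0 <= t -> 0 <= chi4 t).
  { intros s hs. unfold chi4. apply Rmult_le_pos; [left; apply exp_pos|]. nra. }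
  assert (H3 : forall t, 0 <= t -> 0 <= chi3 t).
  { apply (nonneg_from_derivative chi3 chi4); [unfold chi3; rewrite E; lra| |exact H4].
    unfold chi3, chi4. derive_expoly. }
  assert (H2 : forall t, 0 <= t -> 0 <= chi2 t).
  { apply (nonneg_from_derivative chi2 chi3); [unfold chi2; rewrite E; lra| |exact H3].
    unfold chi2, chi3. derive_expoly. }
  assert (H1 : forall t, 0 <= t -> 0 <= chi1 t).
  { apply (nonneg_from_derivative chi1 chi2); [unfold chi1; rewrite E; lra| |exact H2].
    unfold chi1, chi2. derive_expoly. }
  apply (nonneg_from_derivative chi0 chi1); [unfold chi0; rewrite E; lra| |exact H1].
  unfold chi0, chi1. derive_expoly.
Qed.

Lemma phi0_nonneg t : 0 <= t -> 0 <= phi0 t.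
Proof.
  assert (E := exp_0).
  assert (E2 : exp (2 * 0) = 1) by (rewrite Rmult_0_r; exact exp_0).
  assert (G4 : forall t, 0 <= t -> 0 <= phi4 t).
  { intros s hs. replace (phi4 s) with (exp s * chi0 s).
    - apply Rmult_le_pos; [left; apply exp_pos|apply chi0_nonneg; exact hs].
    - unfold phi4, chi0. replace (2 * s) with (s + s) by ring. rewrite exp_plus. ring. }
  assert (G3 : forall t, 0 <= t -> 0 <= phi3 t).
  { apply (nonneg_from_derivative phi3 phi4); [unfold phi3; rewrite E, E2; lra| |exact G4].
    unfold phi3, phi4. derive_expoly. }
  assert (G2 : forall t, 0 <= t -> 0 <= phi2 t).
  { apply (nonneg_from_derivative phi2 phi3); [unfold phi2; rewrite E, E2; lra| |exact G3].
    unfold phi2, phi3. derive_expoly. }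
  assert (G1 : forall t, 0 <= t -> 0 <= phi1 t).
  { apply (nonneg_from_derivative phi1 phi2); [unfold phi1; rewrite E, E2; lra| |exact G2].
    unfold phi1, phi2. derive_expoly. }
  apply (nonneg_from_derivative phi0 phi1); [unfold phi0; rewrite E, E2; lra| |exact G1].
  unfold phi0, phi1. derive_expoly.
Qed.

Definition kappa_terms : list term :=
  (1/12, 3%nat, 1) :: (-1, 2%nat, 1) :: (9/2, 1%nat, 1) :: (-43/6, 0%nat, 1) ::
  (-1/12, 3%nat, 2) :: (1, 2%nat, 2) :: (-4/3, 1%nat, 2) :: (40/3, 0%nat, 2) ::
  (-13/6, 1%nat, 3) :: (-37/6, 0%nat, 3) :: nil.

Lemma kappa_laplace z : 0 < z -> kappa z = laplace_sum kappa_terms z.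
Proof.
  intro hz. unfold kappa, q_approx, rat_r, laplace_sum, kappa_terms.
  replace (INR (fact 3)) with 6 by (simpl; ring).
  replace (INR (fact 2)) with 2 by (simpl; ring).
  replace (INR (fact 1)) with 1 by (simpl; ring).
  replace (INR (fact 0)) with 1 by (simpl; ring).
  field. repeat split; lra.
Qed.

Lemma kernel_kappa_terms t : kernel kappa_terms t = exp (- (3 * t)) * phi0 t.
Proof.
  unfold kappa_terms, kernel, phi0.
  assert (e1 : exp (- (1 * t)) = exp (- (3 * t)) * exp (2 * t)).
  { rewrite <- exp_plus. f_equal. ring. }
  assert (e2 : exp (- (2 * t)) = exp (- (3 * t)) * exp t).
  { rewrite <- exp_plus. f_equal. ring. }
  rewrite e1, e2. ring.
Qed.

Lemma cm_kappa_terms : completely_monotonic_pos (laplace_sum kappa_terms).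
Proof.
  apply cm_laplace_sum.
  - intros c k b h. unfold kappa_terms in h. simpl in h.
    repeat (destruct h as [h|h]; [inversion h; lra|]). inversion h.
  - intros t ht. rewrite kernel_kappa_terms. apply Rmult_le_pos; [left; apply exp_pos|].
    apply phi0_nonneg. lra.
Qed.

(** ** The series for [psi'] and [psi''] from the Gauss product for Gamma *)

Lemma ln_le_sub_1 z : 0 < z -> ln z <= z - 1.
Proof. intro hz. assert (H := exp_ineq1_le (ln z)). rewrite exp_ln in H by exact hz. lra. Qed.

Lemma ln_diff_bounds a b : 0 < a -> 0 < b -> 1 - b / a <= ln a - ln b <= a / b - 1.
Proof.
  intros ha hb. split.
  - assert (H := ln_le_sub_1 (b / a) ltac:(unfold Rdiv; apply Rmult_lt_0_compat; [lra|apply Rinv_0_lt_compat; lra])).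
    unfold Rdiv in H. rewrite ln_mult, ln_Rinv in H by (try apply Rinv_0_lt_compat; lra).
    unfold Rdiv. lra.
  - assert (H := ln_le_sub_1 (a / b) ltac:(unfold Rdiv; apply Rmult_lt_0_compat; [lra|apply Rinv_0_lt_compat; lra])).
    unfold Rdiv in H. rewrite ln_mult, ln_Rinv in H by (try apply Rinv_0_lt_compat; lra).
    unfold Rdiv. lra.
Qed.

(** [lgamma_n n] is the logarithm of the [n]-th Gauss product [Gamma_seq _ n];
    [psi_n], ..., [psi3_n] are its successive derivatives. *)
Definition lgamma_n (n : nat) (y : R) : R :=
  ln (INR (fact n)) + y * ln (INR n) - sum_f_R0 (fun k => ln (y + INR k)) n.
Definition psi_n (n : nat) (y : R) : R := ln (INR n) - sum_f_R0 (fun k => / (y + INR k)) n.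
Definition psi1_n (n : nat) (y : R) : R := sum_f_R0 (fun k => / (y + INR k) ^ 2) n.
Definition psi2_n (n : nat) (y : R) : R := - 2 * sum_f_R0 (fun k => / (y + INR k) ^ 3) n.
Definition psi3_n (n : nat) (y : R) : R := 6 * sum_f_R0 (fun k => / (y + INR k) ^ 4) n.

(** Increment bounds [|a (j+1) - a j| <= C (1/j - 1/(j+1))], uniform in [y]
    on bounded sets; by [telescoping_bound] they make the sequences uniformly
    Cauchy. *)
Lemma lgamma_n_increment j y : (1 <= j)%nat -> 0 < y ->
  Rabs (lgamma_n (S j) y - lgamma_n j y) <= y * (1 + y) * (/ INR j - / INR (S j)).
Proof.
  intros hj hy. unfold lgamma_n. rewrite tech5.
  rewrite fact_simpl, mult_INR, ln_mult by (try apply INR_fact_lt_0; apply lt_0_INR; lia).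
  assert (hn : 1 <= INR j) by (apply (le_INR 1); lia).
  rewrite S_INR. set (n := INR j) in *.
  replace (ln (n + 1) + ln (INR (fact j)) + y * ln (n + 1) -
     (sum_f_R0 (fun k => ln (y + INR k)) j + ln (y + (n + 1))) -
     (ln (INR (fact j)) + y * ln n - sum_f_R0 (fun k => ln (y + INR k)) j))
   with (y * (ln (n + 1) - ln n) - (ln (y + (n + 1)) - ln (n + 1))) by ring.
  destruct (ln_diff_bounds (n + 1) n ltac:(lra) ltac:(lra)) as [A1 A2].
  destruct (ln_diff_bounds (y + (n + 1)) (n + 1) ltac:(lra) ltac:(lra)) as [B1 B2].
  set (A := ln (n + 1) - ln n) in *. set (B := ln (y + (n + 1)) - ln (n + 1)) in *.
  assert (e1 : 1 - n / (n + 1) = / (n + 1)) by (field; lra).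
  assert (e2 : (n + 1) / n - 1 = / n) by (field; lra).
  assert (e3 : 1 - (n + 1) / (y + (n + 1)) = y / (y + n + 1)) by (field; lra).
  assert (e4 : (y + (n + 1)) / (n + 1) - 1 = y / (n + 1)) by (field; lra).
  rewrite e1 in A1. rewrite e2 in A2. rewrite e3 in B1. rewrite e4 in B2.
  assert (lo : 0 <= y * A - B).
  { assert (y * / (n + 1) <= y * A) by (apply Rmult_le_compat_l; lra). unfold Rdiv in B2. lra. }
  assert (hi : y * A - B <= y * (1 + y) * (/ n - / (n + 1))).
  { assert (y * A <= y * / n) by (apply Rmult_le_compat_l; lra).
    assert (y / n - y / (y + n + 1) <= y * (1 + y) * (/ n - / (n + 1))).
    { replace (y / n - y / (y + n + 1)) with (y * (1 + y) / (n * (y + n + 1))) by (field; lra).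
      replace (y * (1 + y) * (/ n - / (n + 1))) with (y * (1 + y) / (n * (n + 1))) by (field; lra).
      unfold Rdiv. apply Rmult_le_compat_l; [nra|].
      apply Rinv_le_contravar; nra. }
    unfold Rdiv in *. lra. }
  rewrite Rabs_pos_eq by lra. lra.
Qed.

Lemma psi_n_increment j y Y : (1 <= j)%nat -> 0 < y -> y <= Y ->
  Rabs (psi_n (S j) y - psi_n j y) <= (1 + Y) * (/ INR j - / INR (S j)).
Proof.
  intros hj hy hY. unfold psi_n. rewrite tech5.
  assert (hn : 1 <= INR j) by (apply (le_INR 1); lia).
  rewrite S_INR. set (n := INR j) in *.
  replace (ln (n + 1) - (sum_f_R0 (fun k => / (y + INR k)) j + / (y + (n + 1))) -
     (ln n - sum_f_R0 (fun k => / (y + INR k)) j))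
   with ((ln (n + 1) - ln n) - / (y + (n + 1))) by ring.
  destruct (ln_diff_bounds (n + 1) n ltac:(lra) ltac:(lra)) as [A1 A2].
  set (A := ln (n + 1) - ln n) in *.
  assert (e1 : 1 - n / (n + 1) = / (n + 1)) by (field; lra).
  assert (e2 : (n + 1) / n - 1 = / n) by (field; lra).
  rewrite e1 in A1. rewrite e2 in A2.
  assert (lo : / (y + (n + 1)) <= / (n + 1)) by (apply Rinv_le_contravar; lra).
  assert (hi : / n - / (y + (n + 1)) <= (1 + Y) * (/ n - / (n + 1))).
  { replace (/ n - / (y + (n + 1))) with ((y + 1) / (n * (y + n + 1))) by (field; lra).
    replace ((1 + Y) * (/ n - / (n + 1))) with ((1 + Y) / (n * (n + 1))) by (field; lra).
    unfold Rdiv. apply Rmult_le_compat; try lra.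
    - left. apply Rinv_0_lt_compat. nra.
    - apply Rinv_le_contravar; nra. }
  rewrite Rabs_pos_eq by lra. lra.
Qed.

Lemma psi1_n_increment j y : (1 <= j)%nat -> 0 < y ->
  Rabs (psi1_n (S j) y - psi1_n j y) <= 1 * (/ INR j - / INR (S j)).
Proof.
  intros hj hy. unfold psi1_n. rewrite tech5.
  assert (hn : 1 <= INR j) by (apply (le_INR 1); lia).
  rewrite S_INR. set (n := INR j) in *.
  replace (sum_f_R0 (fun k => / (y + INR k) ^ 2) j + / (y + (n + 1)) ^ 2 -
     sum_f_R0 (fun k => / (y + INR k) ^ 2) j) with (/ (y + (n + 1)) ^ 2) by ring.
  replace (1 * (/ n - / (n + 1))) with (/ (n * (n + 1))) by (field; lra).
  rewrite Rabs_pos_eq by (left; apply Rinv_0_lt_compat; apply pow_lt; lra).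
  apply Rinv_le_contravar; [nra|]. simpl. nra.
Qed.

Lemma psi2_n_increment j y : (1 <= j)%nat -> 0 < y ->
  Rabs (psi2_n (S j) y - psi2_n j y) <= 2 * (/ INR j - / INR (S j)).
Proof.
  intros hj hy. unfold psi2_n. rewrite tech5.
  assert (hn : 1 <= INR j) by (apply (le_INR 1); lia).
  rewrite S_INR. set (n := INR j) in *.
  replace (- 2 * (sum_f_R0 (fun k => / (y + INR k) ^ 3) j + / (y + (n + 1)) ^ 3) -
     - 2 * sum_f_R0 (fun k => / (y + INR k) ^ 3) j) with (- (2 * / (y + (n + 1)) ^ 3)) by ring.
  replace (2 * (/ n - / (n + 1))) with (2 * / (n * (n + 1))) by (field; lra).
  rewrite Rabs_Ropp.
  assert (hp : 0 < (y + (n + 1)) ^ 3) by (apply pow_lt; lra).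
  rewrite Rabs_pos_eq by (apply Rmult_le_pos; [lra|left; apply Rinv_0_lt_compat; lra]).
  apply Rmult_le_compat_l; [lra|].
  apply Rinv_le_contravar; [nra|]. simpl.
  assert (1 <= y + (n + 1)) by lra. nra.
Qed.

Lemma derivable_pt_lim_eq f x l l' : derivable_pt_lim f x l -> l = l' -> derivable_pt_lim f x l'.
Proof. intros H ->. exact H. Qed.

Lemma lgamma_n_derivable n y : 0 < y -> derivable_pt_lim (lgamma_n n) y (psi_n n y).
Proof.
  intro hy.
  apply (derivable_pt_lim_eq _ _ (ln (INR n) - sum_f_R0 (fun k => / (y + INR k)) n)); [|reflexivity].
  apply (derivable_pt_lim_minus (fun z => ln (INR (fact n)) + z * ln (INR n))
           (fun z => sum_f_R0 (fun k => ln (z + INR k)) n)).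
  - apply is_derive_Reals. auto_derive; [exact I|ring].
  - apply (sum_derivable (fun k z => ln (z + INR k)) (fun k z => / (z + INR k))).
    intro k. apply is_derive_Reals. assert (0 <= INR k) by apply pos_INR.
    auto_derive; [lra|field; lra].
Qed.

Lemma psi_n_derivable n y : 0 < y -> derivable_pt_lim (psi_n n) y (psi1_n n y).
Proof.
  intro hy.
  apply (derivable_pt_lim_eq _ _ (0 - sum_f_R0 (fun k => - / (y + INR k) ^ 2) n)).
  - apply (derivable_pt_lim_minus (fun z => ln (INR n))
           (fun z => sum_f_R0 (fun k => / (z + INR k)) n)).
    + apply derivable_pt_lim_const.
    + apply (sum_derivable (fun k z => / (z + INR k)) (fun k z => - / (z + INR k) ^ 2)).
      intro k. apply is_derive_Reals. assert (0 <= INR k) by apply pos_INR.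
      auto_derive; [lra|field; lra].
  - unfold psi1_n. rewrite <- (Rmult_1_l (sum_f_R0 (fun k => - / (y + INR k) ^ 2) n)).
    rewrite scal_sum. ring_simplify.
    replace (- (sum_f_R0 (fun i => - / (y + INR i) ^ 2 * 1) n)) with
      (-1 * sum_f_R0 (fun i => - / (y + INR i) ^ 2 * 1) n) by ring.
    rewrite scal_sum. apply sum_eq. intros. ring.
Qed.

Lemma psi1_n_derivable n y : 0 < y -> derivable_pt_lim (psi1_n n) y (psi2_n n y).
Proof.
  intro hy.
  apply (derivable_pt_lim_eq _ _ (sum_f_R0 (fun k => - 2 * / (y + INR k) ^ 3) n)).
  - apply (sum_derivable (fun k z => / (z + INR k) ^ 2) (fun k z => - 2 * / (z + INR k) ^ 3)).
    intro k. apply is_derive_Reals. assert (0 <= INR k) by apply pos_INR.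
    auto_derive; [nra|field; lra].
  - unfold psi2_n. rewrite scal_sum. apply sum_eq. intros. ring.
Qed.

Lemma psi2_n_derivable n y : 0 < y -> derivable_pt_lim (psi2_n n) y (psi3_n n y).
Proof.
  intro hy.
  apply (derivable_pt_lim_eq _ _ (- 2 * sum_f_R0 (fun k => - 3 * / (y + INR k) ^ 4) n)).
  - apply derivable_pt_lim_scal.
    apply (sum_derivable (fun k z => / (z + INR k) ^ 3) (fun k z => - 3 * / (z + INR k) ^ 4)).
    intro k. apply is_derive_Reals. assert (0 <= INR k) by apply pos_INR.
    assert (0 < y + INR k) by lra.
    auto_derive; [repeat apply Rmult_integral_contrapositive_currified; lra|field; lra].
  - unfold psi3_n. rewrite !scal_sum. apply sum_eq. intros. ring.
Qed.

Lemma cv_of_derivatives (Ea Eb Ec : nat -> R -> R) (f f' : R -> R) (C : R -> R) :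
  (forall n y, 0 < y -> derivable_pt_lim (Ea n) y (Eb n y)) ->
  (forall n y, 0 < y -> derivable_pt_lim (Eb n) y (Ec n y)) ->
  (forall y, 0 < y -> Un_cv (fun N => Ea (S N) y) (f y)) ->
  (forall x, 0 < x -> derivable_pt_lim f x (f' x)) ->
  (forall x, 0 < x -> 0 <= C x /\ forall j y, (1 <= j)%nat -> 0 < y -> Rabs (y - x) < x / 2 ->
        Rabs (Eb (S j) y - Eb j y) <= C x * (/ INR j - / INR (S j))) ->
  forall x, 0 < x -> Un_cv (fun N => Eb (S N) x) (f' x).
Proof.
  intros hab hbc hcv hf hC x hx.
  destruct (hC x hx) as [hC0 hCb].
  assert (Hb : forall n m y, Rabs (y - x) < x / 2 -> (n <= m)%nat ->
            Rabs (Eb (S m) y - Eb (S n) y) <= C x / INR (S n)).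
  { intros n m y hy hnm.
    apply (telescoping_bound (fun j => Eb j y) (C x) hC0); try lia.
    intros j hj. apply hCb; auto. apply Rabs_def2 in hy. lra. }
  assert (Hd := derivative_of_limit (fun N => Ea (S N)) (fun N => Eb (S N)) f x (x / 2)
                 (fun N => C x / INR (S N)) ltac:(lra)).
  assert (Hd' : derivable_pt_lim f x (seq_lim (fun N => Eb (S N) x))).
  { apply Hd.
    - intros n y hy. apply hab. apply Rabs_def2 in hy. lra.
    - intros n y hy. apply derivable_continuous_pt. exists (Ec (S n) y). apply hbc.
      apply Rabs_def2 in hy. lra.
    - intros y hy. apply hcv. apply Rabs_def2 in hy. lra.
    - apply cv_c_over_n.
    - exact Hb. }
  rewrite (uniqueness_limite f x (f' x) _ (hf x hx) Hd').
  destruct (uniform_cauchy_limit (fun N => Eb (S N)) (fun y => Rabs (y - x) < x / 2) (fun N => C x / INR (S N))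
             (cv_c_over_n (C x)) Hb x) as [H _].
  - rewrite Rminus_diag, Rabs_R0. lra.
  - exact H.
Qed.

Lemma poch_pos y n : 0 < y -> 0 < poch y n.
Proof.
  intro hy. induction n as [|n IH]; [exact hy|].
  change (poch y (S n)) with (poch y n * (y + INR (S n))).
  apply Rmult_lt_0_compat; auto. assert (0 <= INR (S n)) by apply pos_INR. lra.
Qed.

Lemma ln_poch y n : 0 < y -> ln (poch y n) = sum_f_R0 (fun k => ln (y + INR k)) n.
Proof.
  intro hy. induction n as [|n IH].
  - simpl. rewrite Rplus_0_r. reflexivity.
  - change (poch y (S n)) with (poch y n * (y + INR (S n))). rewrite tech5.
    rewrite ln_mult; [rewrite IH; reflexivity|apply poch_pos; auto|].
    assert (0 <= INR (S n)) by apply pos_INR. lra.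
Qed.

Lemma Gamma_seq_exp y n : 0 < y -> (1 <= n)%nat -> Gamma_seq y n = exp (lgamma_n n y).
Proof.
  intros hy hn. unfold Gamma_seq, lgamma_n, Rpower.
  assert (hN : 0 < INR n) by (apply lt_0_INR; lia).
  assert (hf := INR_fact_lt_0 n). assert (hp := poch_pos y n hy).
  rewrite <- ln_poch by exact hy.
  unfold Rminus. rewrite !exp_plus. rewrite exp_Ropp, (exp_ln (poch y n)) by exact hp.
  rewrite (exp_ln (INR (fact n))) by exact hf. rewrite Rmult_comm with (r1 := y). unfold Rdiv. ring.
Qed.

Lemma lgamma_n_cv (G : R -> R) (hG : is_Gamma_on_pos G) y : 0 < y ->
  Un_cv (fun N => lgamma_n (S N) y) (ln (G y)).
Proof.
  intro hy.
  assert (Hb : forall n m z, z = y -> (n <= m)%nat ->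
            Rabs (lgamma_n (S m) z - lgamma_n (S n) z) <= y * (1 + y) / INR (S n)).
  { intros n m z -> hnm.
    apply (telescoping_bound (fun j => lgamma_n j y) (y * (1 + y))); try lia.
    - nra.
    - intros j hj. apply lgamma_n_increment; auto. }
  destruct (uniform_cauchy_limit (fun N => lgamma_n (S N)) (fun z => z = y) (fun N => y * (1 + y) / INR (S N))
             (cv_c_over_n _) Hb y eq_refl) as [Hl _].
  set (l := seq_lim (fun N => lgamma_n (S N) y)) in *.
  assert (H1 : Un_cv (fun N => Gamma_seq y (S N)) (exp l)).
  { assert (He : Un_cv (fun N => exp (lgamma_n (S N) y)) (exp l)).
    { apply (continuity_seq exp). apply derivable_continuous_pt, derivable_pt_exp. exact Hl. }
    intros eps he. destruct (He eps he) as [N HN]. exists N. intros n hn.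
    rewrite Gamma_seq_exp by (auto; lia). apply HN; auto. }
  assert (H2 : Un_cv (fun N => Gamma_seq y (S N)) (G y)).
  { apply cv_shift. apply hG. exact hy. }
  rewrite <- (UL_sequence _ _ _ H1 H2). rewrite ln_exp. exact Hl.
Qed.





Definition polygamma_series (p1 p2 : R -> R) : Prop :=
  forall x, 0 < x -> Un_cv (fun N => psi1_n N x) (p1 x) /\ Un_cv (fun N => psi2_n N x) (p2 x).

(** [psi'], [psi''] are the sums of the series [sum 1/(x+k)^2], [-2 sum 1/(x+k)^3]:
    differentiate the limit [ln Gamma = lim lgamma_n] three times termwise. *)
Lemma polygamma_series_of_Gamma (G psi psi1 psi2 : R -> R)
  (hG : is_Gamma_on_pos G)
  (hpsi : forall x, 0 < x -> derivable_pt_lim (fun t => ln (G t)) x (psi x))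
  (hpsi1 : forall x, 0 < x -> derivable_pt_lim psi x (psi1 x))
  (hpsi2 : forall x, 0 < x -> derivable_pt_lim psi1 x (psi2 x)) :
  polygamma_series psi1 psi2.
Proof.
  assert (S1 := cv_of_derivatives lgamma_n psi_n psi1_n (fun t => ln (G t)) psi (fun x => 1 + 3 * x / 2)
                 lgamma_n_derivable psi_n_derivable (lgamma_n_cv G hG) hpsi).
  assert (S1' : forall x, 0 < x -> Un_cv (fun N => psi_n (S N) x) (psi x)).
  { apply S1. intros x hx. split; [lra|]. intros j y hj hy hyx.
    apply psi_n_increment; auto. apply Rabs_def2 in hyx. lra. }
  assert (S2 := cv_of_derivatives psi_n psi1_n psi2_n psi psi1 (fun _ => 1) psi_n_derivable psi1_n_derivable S1' hpsi1).
  assert (S2' : forall x, 0 < x -> Un_cv (fun N => psi1_n (S N) x) (psi1 x)).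
  { apply S2. intros x hx. split; [lra|]. intros j y hj hy hyx. apply psi1_n_increment; auto. }
  assert (S3 := cv_of_derivatives psi1_n psi2_n psi3_n psi1 psi2 (fun _ => 2) psi1_n_derivable psi2_n_derivable S2' hpsi2).
  assert (S3' : forall x, 0 < x -> Un_cv (fun N => psi2_n (S N) x) (psi2 x)).
  { apply S3. intros x hx. split; [lra|]. intros j y hj hy hyx. apply psi2_n_increment; auto. }
  intros x hx. split; apply cv_unshift; auto.
Qed.

Lemma psi1_n_succ N x : psi1_n (S N) x = / x ^ 2 + psi1_n N (x + 1).
Proof.
  unfold psi1_n. rewrite sum_split_first. simpl INR at 1. rewrite Rplus_0_r. f_equal.
  apply sum_eq. intros. rewrite S_INR. f_equal. f_equal. ring.
Qed.

Lemma psi2_n_succ N x : psi2_n (S N) x = - 2 / x ^ 3 + psi2_n N (x + 1).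
Proof.
  unfold psi2_n. rewrite sum_split_first. simpl INR at 1. rewrite Rplus_0_r.
  unfold Rdiv. rewrite Rmult_plus_distr_l. f_equal.
  f_equal. apply sum_eq. intros. rewrite S_INR. f_equal. f_equal. ring.
Qed.

(** Comparison of the series with [int dt / (y+t)^2]. *)
Lemma psi1_n_bounds N y : 0 < y -> 0 <= psi1_n N y <= / y ^ 2 + / y - / (y + INR N).
Proof.
  intro hy. induction N as [|N IH].
  - change (psi1_n 0 y) with (/ (y + INR 0) ^ 2). change (INR 0) with 0. rewrite !Rplus_0_r. split.
    + left. apply Rinv_0_lt_compat. apply pow_lt. lra.
    + lra.
  - replace (psi1_n (S N) y) with (psi1_n N y + / (y + INR (S N)) ^ 2) by (unfold psi1_n; rewrite tech5; reflexivity).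
    rewrite S_INR. assert (hN : 0 <= INR N) by apply pos_INR.
    assert (h1 : 0 < / (y + (INR N + 1)) ^ 2) by (apply Rinv_0_lt_compat; apply pow_lt; lra).
    assert (h2 : / (y + (INR N + 1)) ^ 2 <= / (y + INR N) - / (y + (INR N + 1))).
    { replace (/ (y + INR N) - / (y + (INR N + 1))) with (/ ((y + INR N) * (y + INR N + 1))) by (field; lra).
      apply Rinv_le_contravar; [nra|]. simpl. nra. }
    lra.
Qed.

Lemma psi2_n_bounds N y : 0 < y -> - (2 / y * (/ y ^ 2 + / y)) <= psi2_n N y <= 0.
Proof.
  intro hy.
  assert (H : 0 <= sum_f_R0 (fun k => / (y + INR k) ^ 3) N <= / y * psi1_n N y).
  { unfold psi1_n. rewrite scal_sum. split.
    - apply cond_pos_sum. intro k. assert (0 <= INR k) by apply pos_INR.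
      left. apply Rinv_0_lt_compat, pow_lt. lra.
    - apply sum_Rle. intros k _. assert (0 <= INR k) by apply pos_INR.
      assert (0 < y + INR k) by lra.
      replace (/ (y + INR k) ^ 2 * / y) with (/ ((y + INR k) ^ 2 * y)) by (field; lra).
      apply Rinv_le_contravar. { apply Rmult_lt_0_compat; [apply pow_lt|]; lra. } simpl. assert (0 < (y + INR k) * (y + INR k)) by nra. nra. }
  destruct (psi1_n_bounds N y hy) as [B1 B2].
  assert (/ (y + INR N) > 0). { apply Rinv_0_lt_compat. assert (0 <= INR N) by apply pos_INR. lra. }
  assert (0 < / y) by (apply Rinv_0_lt_compat; lra).
  unfold psi2_n. split; [|lra].
  assert (/ y * psi1_n N y <= / y * (/ y ^ 2 + / y)) by (apply Rmult_le_compat_l; lra).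
  unfold Rdiv. lra.
Qed.

Section PolygammaSeries.
Variables p1 p2 : R -> R.
Hypothesis HP : polygamma_series p1 p2.

Lemma p1_shift x : 0 < x -> p1 x = / x ^ 2 + p1 (x + 1).
Proof.
  intros hx. destruct (HP x hx) as [H1 _]. destruct (HP (x + 1) ltac:(lra)) as [H2 _].
  apply (UL_sequence (fun N => psi1_n (S N) x)).
  - apply (cv_shift (fun N => _ N x)). exact H1.
  - apply (Un_cv_ext (fun N => / x ^ 2 + psi1_n N (x + 1))); [intro; symmetry; apply psi1_n_succ|].
    apply CV_plus; [apply cv_const|exact H2].
Qed.

Lemma p2_shift x : 0 < x -> p2 x = - 2 / x ^ 3 + p2 (x + 1).
Proof.
  intros hx. destruct (HP x hx) as [_ H1]. destruct (HP (x + 1) ltac:(lra)) as [_ H2].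
  apply (UL_sequence (fun N => psi2_n (S N) x)).
  - apply (cv_shift (fun N => _ N x)). exact H1.
  - apply (Un_cv_ext (fun N => - 2 / x ^ 3 + psi2_n N (x + 1))); [intro; symmetry; apply psi2_n_succ|].
    apply CV_plus; [apply cv_const|exact H2].
Qed.

Lemma p1_bound y : 0 < y -> 0 <= p1 y <= / y ^ 2 + / y.
Proof.
  intros hy. destruct (HP y hy) as [H1 _]. split.
  - apply (@Rle_cv_lim (fun _ => 0) (fun N => psi1_n N y)); [|apply cv_const|exact H1].
    intro n. apply psi1_n_bounds; auto.
  - apply (@Rle_cv_lim (fun N => psi1_n N y) (fun _ => / y ^ 2 + / y)); [|exact H1|apply cv_const].
    intro n. destruct (psi1_n_bounds n y hy). assert (0 <= INR n) by apply pos_INR.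
    assert (0 < / (y + INR n)) by (apply Rinv_0_lt_compat; lra). lra.
Qed.

Lemma p2_bound y : 0 < y -> - (2 / y * (/ y ^ 2 + / y)) <= p2 y <= 0.
Proof.
  intros hy. destruct (HP y hy) as [_ H1]. split.
  - apply (@Rle_cv_lim (fun _ => - (2 / y * (/ y ^ 2 + / y))) (fun N => psi2_n N y)); [|apply cv_const|exact H1].
    intro n. apply psi2_n_bounds; auto.
  - apply (@Rle_cv_lim (fun N => psi2_n N y) (fun _ => 0)); [|exact H1|apply cv_const].
    intro n. apply psi2_n_bounds; auto.
Qed.

End PolygammaSeries.

(** ** Telescoping: [f0] is completely monotonic *)

Lemma rat_r_bound z : 1 <= z -> 0 <= rat_r z <= 2 * (/ z) ^ 4.
Proof.
  intro hz. unfold rat_r.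
  assert (h4 : 0 < z ^ 4) by (apply pow_lt; lra).
  assert (h2 : 0 < (z + 1) ^ 2) by (apply pow_lt; lra).
  assert (hd : 0 < 12 * z ^ 4 * (z + 1) ^ 2) by (apply Rmult_lt_0_compat; lra).
  split.
  - unfold Rdiv. apply Rmult_le_pos; [|left; apply Rinv_0_lt_compat; lra].
    assert (0 <= z ^ 2) by (apply pow_le; lra). lra.
  - apply (Rmult_le_reg_r (12 * z ^ 4 * (z + 1) ^ 2)); [lra|].
    unfold Rdiv. rewrite Rmult_assoc, Rinv_l by lra. rewrite Rmult_1_r.
    replace (2 * (/ z) ^ 4 * (12 * z ^ 4 * (z + 1) ^ 2)) with (24 * (z + 1) ^ 2) by (field; lra).
    simpl. nra.
Qed.

Lemma q_approx_bound z : 1 <= z -> Rabs (q_approx z) <= 4 / z.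
Proof.
  intro hz. unfold q_approx.
  destruct (rat_r_bound z hz) as [a1 a2]. destruct (rat_r_bound (z + 1) ltac:(lra)) as [b1 b2].
  set (u := / z).
  assert (hu : 0 < u <= 1).
  { unfold u. split; [apply Rinv_0_lt_compat; lra|]. rewrite <- Rinv_1. apply Rinv_le_contravar; lra. }
  assert (hu1 : / (z + 1) <= u) by (unfold u; apply Rinv_le_contravar; lra).
  assert (hz2 : z ^ 2 * u ^ 2 = 1) by (unfold u; field; lra).
  assert (q1 : (/ (z + 1)) ^ 4 <= u ^ 4).
  { apply pow_incr. split; [left; apply Rinv_0_lt_compat; lra|exact hu1]. }
  assert (e0 : / (2 * z ^ 2) = u ^ 2 / 2) by (unfold u; field; lra).
  assert (t1 : 0 <= z ^ 2 * rat_r z <= 2 * u ^ 2).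
  { split; [apply Rmult_le_pos; [apply pow_le; lra|exact a1]|].
    replace (2 * u ^ 2) with (z ^ 2 * (2 * u ^ 4)) by (unfold u; field; lra).
    apply Rmult_le_compat_l; [apply pow_le; lra|exact a2]. }
  assert (t2 : 0 <= z ^ 2 * rat_r (z + 1) <= 2 * u ^ 2).
  { split; [apply Rmult_le_pos; [apply pow_le; lra|exact b1]|].
    replace (2 * u ^ 2) with (z ^ 2 * (2 * u ^ 4)) by (unfold u; field; lra).
    apply Rmult_le_compat_l; [apply pow_le; lra|lra]. }
  replace (4 / z) with (4 * u) by (unfold u; field; lra).
  rewrite e0.
  replace (z ^ 2 * (rat_r z - rat_r (z + 1)) / 2) with ((z ^ 2 * rat_r z - z ^ 2 * rat_r (z + 1)) / 2) by field.
  assert (u ^ 2 <= u) by (simpl; nra).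
  apply Rabs_le. split; lra.
Qed.

(** The key identity: with [P = psi'(z+1)], [Q = psi''(z+1)],
    [f0 z - f0 (z+1) = 2 z^-2 (psi' z - q z)]. *)
Lemma f0_difference P Q z : 0 < z ->
  (/ z ^ 2 + P) ^ 2 + (- 2 / z ^ 3 + Q) - rat_r z - (P ^ 2 + Q - rat_r (z + 1))
  = 2 / z ^ 2 * (/ z ^ 2 + P - q_approx z).
Proof. intro hz. unfold q_approx, rat_r. field. repeat split; lra. Qed.

Lemma kappa_partial_sum y N : 0 < y ->
  sum_f_R0 (fun j => kappa (y + INR j)) N = psi1_n N y - q_approx y + q_approx (y + INR N + 1).
Proof.
  intro hy. induction N as [|N IH].
  - simpl sum_f_R0. unfold kappa, psi1_n. change (INR 0) with 0. rewrite !Rplus_0_r. simpl sum_f_R0.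
    replace (y + 0) with y by ring. field. lra.
  - rewrite tech5, IH. unfold psi1_n. rewrite tech5. fold (psi1_n N y). unfold kappa.
    rewrite S_INR. replace (y + (INR N + 1) + 1) with (y + INR N + 1 + 1) by ring.
    replace (y + (INR N + 1)) with (y + INR N + 1) by ring. ring.
Qed.

Lemma cm_inv_pow k b : 0 <= b -> completely_monotonic_pos (fun x => / (x + b) ^ (S k)).
Proof.
  intro hb. assert (hf := INR_fact_lt_0 k).
  apply (cm_ext (laplace_sum ((/ INR (fact k), k, b) :: nil))).
  - apply cm_laplace_sum.
    + intros c k' b' [h|[]]. inversion h. lra.
    + intros t ht. simpl. rewrite Rplus_0_r. apply Rmult_le_pos; [|left; apply exp_pos].
      apply Rmult_le_pos; [left; apply Rinv_0_lt_compat; lra|apply pow_le; lra].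
  - intros x hx. simpl. assert (0 < (x + b) ^ k) by (apply pow_lt; lra).
    field. repeat split; lra.
Qed.

Definition kappa_sum (y : R) : R :=
  seq_lim (fun N => sum_f_R0 (fun j => laplace_sum kappa_terms (y + INR j)) N).

(** The function [f_lam] for [psi' = 1/x^2 + A], [psi'' = -2/x^3 + B], scaled by
    its denominator. *)
Lemma scaled_f_lambda lam x A B : 0 < x ->
  ((/ x ^ 2 + A) ^ 2 + (- 2 / x ^ 3 + B) - (x ^ 2 + lam * x + 12) / (12 * x ^ 4 * (x + 1) ^ 2))
    * (12 * x ^ 4 * (x + 1) ^ 2)
  = - 24 * x ^ 3 - 37 * x ^ 2 - lam * x
    + x ^ 2 * (x + 1) ^ 2 * (24 * A + 12 * A ^ 2 * x ^ 2) + 12 * B * x ^ 4 * (x + 1) ^ 2.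
Proof. intro hx. field. lra. Qed.

Lemma scaled_f_lambda_bound x A B : 0 < x <= 1/2 -> 0 <= A <= 2 -> B <= 0 ->
  x ^ 2 * (x + 1) ^ 2 * (24 * A + 12 * A ^ 2 * x ^ 2) + 12 * B * x ^ 4 * (x + 1) ^ 2
    <= 135 * x ^ 2.
Proof.
  intros hx hA hB.
  assert (e1 : 0 <= (x + 1) ^ 2 <= 9 / 4) by (simpl; split; nra).
  assert (e2 : 0 <= 24 * A + 12 * A ^ 2 * x ^ 2 <= 60).
  { assert (0 <= A ^ 2 * x ^ 2 <= 1); [|lra].
    rewrite <- Rpow_mult_distr. split; [apply pow_le; nra|].
    rewrite <- (pow1 2). apply pow_incr. nra. }
  assert (e3 : 0 <= x ^ 2) by (apply pow_le; lra).
  assert (e4 : 12 * B * x ^ 4 * (x + 1) ^ 2 <= 0).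
  { assert (0 <= x ^ 4 * (x + 1) ^ 2) by (apply Rmult_le_pos; [apply pow_le|]; lra). nra. }
  assert (x ^ 2 * (x + 1) ^ 2 * (24 * A + 12 * A ^ 2 * x ^ 2) <= x ^ 2 * (9 / 4) * 60); [|lra].
  apply Rmult_le_compat; try lra.
  - apply Rmult_le_pos; lra.
  - apply Rmult_le_compat_l; lra.
Qed.

Section Telescoping.
Variables p1 p2 : R -> R.
Hypothesis HP : polygamma_series p1 p2.

Definition f0 (x : R) : R := p1 x ^ 2 + p2 x - rat_r x.

Lemma f0_bound z : 1 <= z -> Rabs (f0 z) <= 10 / z.
Proof.
  intros hz.
  destruct (p1_bound p1 p2 HP z ltac:(lra)) as [a1 a2].
  destruct (p2_bound p1 p2 HP z ltac:(lra)) as [b1 b2].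
  destruct (rat_r_bound z hz) as [c1 c2].
  set (u := / z) in *.
  assert (hu : 0 < u <= 1).
  { unfold u. split; [apply Rinv_0_lt_compat; lra|]. rewrite <- Rinv_1. apply Rinv_le_contravar; lra. }
  assert (e1 : / z ^ 2 = u ^ 2) by (unfold u; rewrite pow_inv; reflexivity).
  rewrite e1 in a2, b1.
  replace (2 / z) with (2 * u) in b1 by (unfold u; field; lra).
  replace (10 / z) with (10 * u) by (unfold u; field; lra).
  unfold f0.
  assert (u ^ 2 <= u) by (simpl; nra).
  assert (u ^ 4 <= u) by (simpl; nra).
  assert (p1 z ^ 2 <= 4 * u ^ 2) by (simpl; nra).
  assert (2 * u * (u ^ 2 + u) <= 4 * u) by (simpl; nra).
  assert (0 <= p1 z ^ 2) by (simpl; nra). apply Rabs_le. split; lra.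
Qed.

(** [psi' - q = sum_j kappa (x+j)], as [q] vanishes at infinity. *)
Lemma kappa_sum_cv y : 0 < y ->
  Un_cv (fun N => sum_f_R0 (fun j => laplace_sum kappa_terms (y + INR j)) N) (p1 y - q_approx y).
Proof.
  intros hy.
  assert (E : forall N, sum_f_R0 (fun j => laplace_sum kappa_terms (y + INR j)) N = psi1_n N y - q_approx y + q_approx (y + INR N + 1)).
  { intro N. rewrite <- kappa_partial_sum by exact hy. apply sum_eq. intros j _.
    symmetry. apply kappa_laplace. assert (0 <= INR j) by apply pos_INR. lra. }
  intros eps he.
  assert (H0 : Un_cv (fun N => q_approx (y + INR N + 1)) 0).
  { apply (cv_squeeze_0 _ 4). intro N. assert (0 <= INR N) by apply pos_INR.
    eapply Rle_trans; [apply q_approx_bound; lra|].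
    rewrite S_INR. unfold Rdiv. apply Rmult_le_compat_l; [lra|].
    apply Rinv_le_contravar; lra. }
  assert (H := CV_plus _ _ _ _ (CV_minus _ _ _ _ (proj1 (HP y hy)) (cv_const (q_approx y))) H0).
  rewrite Rplus_0_r in H. destruct (H eps he) as [N HN]. exists N. intros n hn.
  rewrite E. apply HN. exact hn.
Qed.

Lemma kappa_sum_val y : 0 < y -> kappa_sum y = p1 y - q_approx y.
Proof. intros hy. apply seq_lim_spec, kappa_sum_cv, hy. Qed.

Lemma cm_kappa_sum : completely_monotonic_pos kappa_sum.
Proof.
  apply cm_series.
  - intro k. apply cm_shift; [apply pos_INR|apply cm_kappa_terms].
  - intros y hy. exists (p1 y - q_approx y). apply kappa_sum_cv, hy.
Qed.

(** [f0 = sum_k 2 (x+k)^-2 (psi' - q)(x+k)]: the partial sums telescope to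
    [f0 x - f0 (x+N+1)], and [f0] vanishes at infinity. *)
Lemma f0_telescoping x : 0 < x ->
  Un_cv (fun N => sum_f_R0 (fun k => 2 / (x + INR k) ^ 2 * kappa_sum (x + INR k)) N) (f0 x).
Proof.
  intro hx.
  assert (Hstep : forall k, 2 / (x + INR k) ^ 2 * kappa_sum (x + INR k)
                            = f0 (x + INR k) - f0 (x + INR k + 1)).
  { intro k. assert (0 <= INR k) by apply pos_INR. set (z := x + INR k).
    assert (hz : 0 < z) by (unfold z; lra).
    rewrite (kappa_sum_val z hz). unfold f0.
    rewrite (p1_shift p1 p2 HP z hz), (p2_shift p1 p2 HP z hz).
    symmetry. apply f0_difference. exact hz. }
  apply (Un_cv_ext (fun N => f0 x - f0 (x + INR N + 1))).
  { intro N. symmetry. induction N as [|N IH].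
    - transitivity (f0 (x + INR 0) - f0 (x + INR 0 + 1)); [exact (Hstep O)|].
      change (INR 0) with 0. rewrite Rplus_0_r. reflexivity.
    - rewrite tech5, Hstep, IH, S_INR.
      replace (x + (INR N + 1)) with (x + INR N + 1) by ring. ring. }
  assert (Hinf : Un_cv (fun N => f0 (x + INR N + 1)) 0).
  { apply (cv_squeeze_0 _ 10). intro N. assert (0 <= INR N) by apply pos_INR.
    eapply Rle_trans; [apply f0_bound; lra|].
    rewrite S_INR. unfold Rdiv. apply Rmult_le_compat_l; [lra|].
    apply Rinv_le_contravar; lra. }
  assert (H := CV_minus _ _ _ _ (cv_const (f0 x)) Hinf). rewrite Rminus_0_r in H. exact H.
Qed.

Lemma cm_f0 : completely_monotonic_pos f0.
Proof.
  apply (cm_ext (fun x => seq_lim (fun N =>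
           sum_f_R0 (fun k => 2 / (x + INR k) ^ 2 * kappa_sum (x + INR k)) N))).
  - apply cm_series.
    + intro k. apply cm_mult.
      * apply (cm_ext (fun x => 2 * / (x + INR k) ^ 2)); [|intros; reflexivity].
        apply cm_scal; [lra|]. apply cm_inv_pow, pos_INR.
      * apply cm_shift; [apply pos_INR|exact cm_kappa_sum].
    + intros y hy. exists (f0 y). apply f0_telescoping, hy.
  - intros x hx. apply seq_lim_spec, f0_telescoping, hx.
Qed.

(** [f_lam = f0 - (lam/12) x^-3 (x+1)^-2] is CM when [lam <= 0]. *)
Lemma cm_f_lambda lam : lam <= 0 ->
  completely_monotonic_pos
    (fun x => p1 x ^ 2 + p2 x - (x ^ 2 + lam * x + 12) / (12 * x ^ 4 * (x + 1) ^ 2)).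
Proof.
  intro hlam.
  apply (cm_ext (fun x => f0 x + (- lam / 12) * (/ (x + 0) ^ 3 * / (x + 1) ^ 2))).
  - apply cm_plus; [exact cm_f0|].
    apply cm_scal; [lra|]. apply cm_mult; apply cm_inv_pow; lra.
  - intros x hx. unfold f0, rat_r. rewrite Rplus_0_r. field. lra.
Qed.

(** For [lam > 0], [f_lam] takes negative values near [0]: with
    [A = psi'(x+1)], [B = psi''(x+1)], the recurrences and [scaled_f_lambda]
    give [12 x^4 (x+1)^2 f_lam x <= 135 x^2 - lam x < 0] for small [x]. *)
Lemma f_lambda_negative_near_0 lam : 0 < lam -> exists x, 0 < x /\
  p1 x ^ 2 + p2 x - (x ^ 2 + lam * x + 12) / (12 * x ^ 4 * (x + 1) ^ 2) < 0.
Proof.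
  intro hlam. set (x := Rmin (1/2) (lam / 200)).
  assert (hx1 : x <= 1/2) by apply Rmin_l.
  assert (hx2 : x <= lam / 200) by apply Rmin_r.
  assert (hx0 : 0 < x) by (apply Rmin_glb_lt; lra).
  exists x. split; [exact hx0|].
  rewrite (p1_shift p1 p2 HP x hx0), (p2_shift p1 p2 HP x hx0).
  destruct (p1_bound p1 p2 HP (x + 1) ltac:(lra)) as [hA0 hA1].
  destruct (p2_bound p1 p2 HP (x + 1) ltac:(lra)) as [_ hB].
  assert (hA : p1 (x + 1) <= 2).
  { assert (/ (x + 1) <= 1) by (rewrite <- Rinv_1; apply Rinv_le_contravar; lra).
    assert (/ (x + 1) ^ 2 <= 1) by (rewrite <- Rinv_1; apply Rinv_le_contravar; simpl; nra).
    lra. }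
  assert (hD : 0 < 12 * x ^ 4 * (x + 1) ^ 2).
  { apply Rmult_lt_0_compat; [apply Rmult_lt_0_compat; [lra|]|]; apply pow_lt; lra. }
  apply (Rmult_lt_reg_r (12 * x ^ 4 * (x + 1) ^ 2)); [exact hD|].
  rewrite Rmult_0_l, scaled_f_lambda by exact hx0.
  assert (q4 : 135 * x ^ 2 < lam * x) by (simpl; nra).
  pose proof (scaled_f_lambda_bound x (p1 (x + 1)) (p2 (x + 1)) ltac:(lra) ltac:(lra) hB).
  assert (0 <= x ^ 2) by (apply pow_le; lra).
  assert (0 <= x ^ 3) by (apply pow_le; lra).
  lra.
Qed.

End Telescoping.

Theorem theorem1p1 (lam : R) (G psi psi1 psi2 : R -> R)
  (hG : is_Gamma_on_pos G)
  (hpsi : forall x, 0 < x -> derivable_pt_lim (fun t => ln (G t)) x (psi x))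
  (hpsi1 : forall x, 0 < x -> derivable_pt_lim psi x (psi1 x))
  (hpsi2 : forall x, 0 < x -> derivable_pt_lim psi1 x (psi2 x)) :
  completely_monotonic_pos
    (fun x => (psi1 x) ^ 2 + psi2 x
              - (x ^ 2 + lam * x + 12) / (12 * x ^ 4 * (x + 1) ^ 2))
  <-> lam <= 0.
Proof.
  pose proof (polygamma_series_of_Gamma G psi psi1 psi2 hG hpsi hpsi1 hpsi2) as HP.
  split.
  - intros [D [HD0 [_ Hsign]]]. apply Rnot_lt_le. intro hlam.
    destruct (f_lambda_negative_near_0 psi1 psi2 HP lam hlam) as [x [hx Hneg]].
    specialize (Hsign O x hx). rewrite HD0, pow_O, Rmult_1_l in Hsign by exact hx.
    lra.
  - apply cm_f_lambda, HP.
Qed.
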